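(* There exist an odd integer $m\ge 3$, a positive integer $n$, and a nonzero, non-symmetric tensor $\mathbb{A}\in T_{m,n}$ that is a $P_0$ tensor.
   Context: $T_{m,n}$ denotes the set of real $m$th order $n$-dimensional tensors $\mathbb{A}=(a_{i_1i_2\ldots i_m})$ with $i_j\in[n]=\{1,\ldots,n\}$. A tensor is symmetric if its entries are invariant under any permutation of the indices. For $x\in\mathbb{R}^n$, $(\mathbb{A}x^{m-1})_i=\sum_{i_2,\ldots,i_m=1}^n a_{ii_2\ldots i_m}x_{i_2}\cdots x_{i_m}$, $i\in[n]$. A tensor $\mathbb{A}\in T_{m,n}$ is a $P_0$ tensor if for every nonzero $x\in\mathbb{R}^n$ there exists $i\in[n]$ with $x_i\neq 0$ and $x_i(\mathbb{A}x^{m-1})_i\ge 0$. *)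

From Stdlib Require Import Reals.
From HB Require Import structures.
From mathcomp Require Import all_boot all_order all_algebra all_fingroup.
From mathcomp Require Import Rstruct.
Set Implicit Arguments. Unset Strict Implicit. Unset Printing Implicit Defensive.
Import Order.TTheory GRing.Theory Num.Theory.
Local Open Scope ring_scope.

(* Multi-indices (i_1,...,i_m) with i_j in [n] = 'I_n (0-based). *)
Definition mindex (m n : nat) := {ffun 'I_m -> 'I_n}.

Definition tensor (m n : nat) := {ffun mindex m n -> R}.

Definition symmetric_tensor (m n : nat) (A : tensor m n) : Prop :=
  forall (s : mindex m n) (sigma : 'S_m),
    A [ffun k => s (sigma k)] = A s.

(* (A x^{m-1})_i = sum_{i_2..i_m} a_{i i_2 ... i_m} x_{i_2} ... x_{i_m}:
   sum over all multi-indices whose first index is i. *)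
Definition tensor_apply (m n : nat) (A : tensor m n) (x : 'I_n -> R) (i : 'I_n) : R :=
  \sum_(s : mindex m n | [forall k : 'I_m, (nat_of_ord k == 0)%N ==> (s k == i)])
     A s * \prod_(k : 'I_m | (nat_of_ord k != 0)%N) x (s k).

Definition P0_tensor (m n : nat) (A : tensor m n) : Prop :=
  forall x : 'I_n -> R, (exists j, x j != 0) ->
    exists i : 'I_n, x i != 0 /\ 0 <= x i * tensor_apply A x i.

From Stdlib Require Import Reals.
From HB Require Import structures.
From mathcomp Require Import all_boot all_order all_algebra all_fingroup.
From mathcomp Require Import Rstruct.
Set Implicit Arguments. Unset Strict Implicit. Unset Printing Implicit Defensive.
Import Order.TTheory GRing.Theory Num.Theory.
Local Open Scope ring_scope.

(* The witness is a tensor with a single nonzero entry [a_s = 1] at a multi-index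
   [s] with [s_0 != s_k] for some [k > 0].  Then [(A x^{m-1})_i] vanishes unless
   [i = s_0], and [(A x^{m-1})_{s_0}] contains the factor [x_{s_k}].  So either
   [x_{s_k} != 0] and [i = s_k] works, or every coordinate of [A x^{m-1}]
   vanishes and any [i] with [x_i != 0] works. *)

Definition unit_tensor (m n : nat) (s : mindex m n) : tensor m n :=
  [ffun t => (t == s)%:R].

Lemma unit_tensor_neq0 (m n : nat) (s : mindex m n) : unit_tensor s != 0.
Proof.
apply/eqP => /(congr1 (fun A : tensor m n => A s)).
by rewrite !ffunE eqxx => /eqP; rewrite oner_eq0.
Qed.

Lemma unit_tensor_not_symmetric (m n : nat) (s : mindex m n) (k l : 'I_m) :
  s k != s l -> ~ symmetric_tensor (unit_tensor s).
Proof.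
move=> skl /(_ s (tperm k l)); rewrite !ffunE eqxx.
case: eqP => [/(congr1 (fun t : mindex m n => t k))|_ /eqP]; last by rewrite eq_sym oner_eq0.
by rewrite ffunE tpermL => /eqP; rewrite eq_sym (negbTE skl).
Qed.

Lemma tensor_apply_unit (m n : nat) (s : mindex m.+1 n) (x : 'I_n -> R) (i : 'I_n) :
  tensor_apply (unit_tensor s) x i
    = (s ord0 == i)%:R * \prod_(k : 'I_m.+1 | k != ord0) x (s k).
Proof.
have first_index (t : mindex m.+1 n) :
    [forall k : 'I_m.+1, (k == 0 :> nat) ==> (t k == i)] = (t ord0 == i).
  apply/forallP/idP => [/(_ ord0) //| ti k]; apply/implyP => /eqP k0.
  by rewrite (_ : k = ord0) //; apply/val_inj.
rewrite /tensor_apply /unit_tensor big_mkcond (bigD1 s) //= [X in _ + X]big1.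
  rewrite addr0 ffunE eqxx mul1r first_index; case: (s ord0 == i); last by rewrite mul0r.
  by rewrite mul1r; apply: eq_bigl.
by move=> t ts; rewrite ffunE (negbTE ts) mul0r if_same.
Qed.

Lemma unit_tensor_P0 (m n : nat) (s : mindex m.+1 n) (k : 'I_m.+1) :
  k != ord0 -> s k != s ord0 -> P0_tensor (unit_tensor s).
Proof.
move=> k0 sk0 x [j xj].
have [xsk0 | xsk] := eqVneq (x (s k)) 0.
- exists j; split => //.
  by rewrite tensor_apply_unit (bigD1 k) //= xsk0 mul0r !mulr0.
- exists (s k); split => //.
  by rewrite tensor_apply_unit eq_sym (negbTE sk0) !mul0r mulr0.
Qed.

Theorem proposition2p3 :
  exists (m n : nat) (A : tensor m n),
    [/\ odd m, (3 <= m)%N & (0 < n)%N] /\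
    [/\ A != 0, ~ symmetric_tensor A & P0_tensor A].
Proof.
pose s : mindex 3 2 := [ffun k => if k == ord_max then ord_max else ord0].
have s_last : s ord_max != s ord0 by rewrite !ffunE.
exists 3%N, 2%N, (unit_tensor s); do 2 split => //.
- exact: unit_tensor_neq0.
- exact: unit_tensor_not_symmetric s_last.
- exact: unit_tensor_P0 s_last.
Qed.
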